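(* Let $h:\mathcal{X}\to\mathcal{Y}$ be such that for every $\lambda\ge0$ the function $(x,x')\mapsto d_{\mathcal{Y}}(h(x),h(x'))-\lambda d_{\mathcal{X}}(x,x')$ is continuous on $\mathcal{X}\times\mathcal{X}$. Then \[ R(h)=\inf_{\lambda\ge0}\Big\{\lambda\epsilon+\mathbf{E}_{P_X}\big[r_\lambda(h,X)\big]\Big\},\qquad r_\lambda(h,x)=\sup_{x'\in\mathcal{X}}\big\{d_{\mathcal{Y}}(h(x),h(x'))-\lambda d_{\mathcal{X}}(x,x')\big\}. \]
   Context: $(\mathcal{X},d_{\mathcal{X}})$ and $(\mathcal{Y},d_{\mathcal{Y}})$ are complete separable metric spaces; $P_X$ is a Borel probability distribution on $\mathcal{X}$ and $\epsilon>0$. The fair regularizer is \[ R(h)=\sup\Big\{\mathbf{E}_\Pi[d_{\mathcal{Y}}(h(X),h(X'))]\;:\;\Pi\in\Delta(\mathcal{X}\times\mathcal{X}),\ \mathbf{E}_\Pi[d_{\mathcal{X}}(X,X')]\le\epsilon,\ \Pi(\cdot,\mathcal{X})=P_X\Big\}, \] where $\Delta(\mathcal{X}\times\mathcal{X})$ is the set of Borel probability measures on $\mathcal{X}\times\mathcal{X}$, $(X,X')\sim\Pi$, and $\Pi(\cdot,\mathcal{X})$ denotes the first marginal of $\Pi$. *)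

From HB Require Import structures.
From mathcomp Require Import all_boot all_order all_algebra.
From mathcomp Require Import all_classical all_reals all_analysis.
Set Implicit Arguments. Unset Strict Implicit. Unset Printing Implicit Defensive.
Import Order.TTheory GRing.Theory Num.Theory.
Local Open Scope classical_set_scope.
Local Open Scope ring_scope.

Section MetricDefs.
Context {R : realType}.

Definition is_metric {T : Type} (d : T -> T -> R) : Prop :=
  [/\ (forall x y, d x y = 0 <-> x = y),
      (forall x y, d x y = d y x) &
      (forall x y z, d x z <= d x y + d y z)].

Definition metric_complete {T : Type} (d : T -> T -> R) : Prop :=
  forall u : nat -> T,
    (forall e : R, 0 < e -> exists N, forall m n, (N <= m)%N -> (N <= n)%N ->
        d (u m) (u n) < e) ->
    exists l, forall e : R, 0 < e -> exists N, forall n, (N <= n)%N -> d (u n) l < e.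

Definition metric_separable {T : Type} (d : T -> T -> R) : Prop :=
  exists D : set T, countable D /\
    forall x (e : R), 0 < e -> exists2 y, D y & d x y < e.

Definition metric_open {T : Type} (d : T -> T -> R) : set (set T) :=
  [set A | forall x, A x -> exists2 r : R, 0 < r & forall y, d x y < r -> A y].

Definition metric_continuous2 {T : Type} (d : T -> T -> R) (f : T -> T -> R) : Prop :=
  forall x x' (e : R), 0 < e -> exists2 del : R, 0 < del &
    forall y y', d x y < del -> d x' y' < del -> `|f y y' - f x x'| < e.

End MetricDefs.

Local Open Scope ereal_scope.

Definition fair_regularizer {R : realType} {dd : measure_display}
  {X : measurableType dd} {Y : Type}
  (dX : X -> X -> R) (dY : Y -> Y -> R) (PX : probability X R) (eps : R)
  (h : X -> Y) : \bar R :=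
  ereal_sup [set v | exists Pi : probability (X * X)%type R,
     [/\ \int[Pi]_z (dX z.1 z.2)%:E <= eps%:E,
         (forall A : set X, measurable A -> Pi (A `*` setT) = PX A) &
         v = \int[Pi]_z (dY (h z.1) (h z.2))%:E]].

Definition r_lambda {R : realType} {X Y : Type}
  (dX : X -> X -> R) (dY : Y -> Y -> R) (h : X -> Y) (lam : R) (x : X) : \bar R :=
  ereal_sup [set ((dY (h x) (h x') - lam * dX x x')%R)%:E | x' in [set: X]].

(** R(h) is the value of a transport problem: maximize E_Pi[g] over couplings
    Pi with first marginal P_X and transport cost E_Pi[d_X] <= eps, where
    g(x,x') = d_Y(h x, h x').

    - Weak duality (R(h) <= dual) is pointwise: g <= (g - lam d_X)(x,x')
      + lam d_X(x,x') <= r_lam(x) + lam d_X(x,x'), then integrate against Pi.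
    - Strong duality rests on two ingredients.
      (a) A one-dimensional Lagrange multiplier lemma: for a convex set F of
          (cost, value) pairs with a Slater point, whose feasible values are
          bounded by v, some lam >= 0 satisfies g - lam (c - eps) <= v on F.
          The set of (cost, value) pairs of couplings is convex because
          couplings can be mixed.
      (b) Measurable near-maximizers: along a dense sequence, a greedy
          selector x |-> T_k(x) is measurable and f(x, T_k x) increases to
          sup_x' f(x,x') for continuous f; the couplings (id, T_k)_# P_X
          thus approach E[r_lam] (monotone convergence).
      If the dual exceeded R(h) at the multiplier lam of (a), (b) would give
      a coupling violating the inequality of (a). *)
From HB Require Import structures.
From mathcomp Require Import all_boot all_order all_algebra.
From mathcomp Require Import all_classical all_reals all_analysis.
From mathcomp Require Import measurable_realfun ring lra.
Import Order.TTheory GRing.Theory Num.Theory.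
Local Open Scope classical_set_scope.
Local Open Scope ring_scope.

Section Mixture.
Local Open Scope ereal_scope.

Lemma probability_mixture {R : realType} {d : measure_display}
  {T : measurableType d} (P1 P2 : probability T R) {a : R}
  (a0 : (0 <= a)%R) (a1 : (a <= 1)%R) :
  exists P : probability T R,
   (forall A, measurable A -> P A = a%:E * P1 A + (1 - a)%R%:E * P2 A) /\
   (forall f : T -> \bar R, measurable_fun setT f -> (forall x, 0 <= f x) ->
     \int[P]_x f x = a%:E * \int[P1]_x f x + (1 - a)%R%:E * \int[P2]_x f x).
Proof.
have b0 : (0 <= 1 - a)%R by rewrite subr_ge0.
pose mu := measure_add (mscale (NngNum a0) P1) (mscale (NngNum b0) P2).
have muE A : mu A = a%:E * P1 A + (1 - a)%R%:E * P2 A.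
  by rewrite /mu measure_addE.
have mu1 : mu setT = 1.
  by rewrite muE !probability_setT !mule1 -EFinD addrC subrK.
pose P := mnormalize mu P1.
have PE A : P A = mu A.
  rewrite /P /mnormalize /=; case: ifPn => [/orP[] /eqP|_].
  - by change (mu setT = 0 -> P1 A = mu A); rewrite mu1 => /eqP; rewrite onee_eq0.
  - by change (mu setT = +oo -> P1 A = mu A); rewrite mu1.
  by change (mu A * (fine (mu setT))^-1%:E = mu A); rewrite mu1 /= invr1 mule1.
exists P; split => [A mA|f mf f0]; first exact: etrans (PE A) (muE A).
rewrite (eq_measure_integral mu); last by move=> A mA _; exact: PE.
by rewrite ge0_integral_measure_add // !ge0_integral_mscale.
Qed.
End Mixture.

Section LagrangeMultiplier.
Context {R : realType} {F : R -> R -> Prop} {eps v c0 g0 : R}.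
Hypothesis F_convex : forall c1 g1 c2 g2 a, F c1 g1 -> F c2 g2 -> 0 <= a -> a <= 1 ->
  F (a * c1 + (1 - a) * c2) (a * g1 + (1 - a) * g2).
Hypothesis F_bounded : forall c g, F c g -> c <= eps -> g <= v.
Hypotheses (F_slater : F c0 g0) (c0_lt : c0 < eps).

(** Mixing an infeasible pair with a strictly feasible one onto the
    constraint boundary bounds the slope of the gain over the cost excess. *)
Lemma mixing_slope cp gp cq gq : F cp gp -> F cq gq -> cq < eps -> eps < cp ->
  (gp - v) * (eps - cq) <= (v - gq) * (cp - eps).
Proof.
move=> Fp Fq cq_lt cp_gt; have d0 : 0 < cp - cq by rewrite subr_gt0 (lt_trans cq_lt).
pose a := (eps - cq) / (cp - cq).
have a0 : 0 <= a by apply: divr_ge0; [rewrite subr_ge0; exact: ltW | exact: ltW].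
have a1 : a <= 1 by rewrite ler_pdivrMr // mul1r lerD2r; exact: ltW.
have on_boundary : a * cp + (1 - a) * cq = eps by rewrite /a; field; exact: lt0r_neq0.
have := F_bounded _ _ (F_convex _ _ _ _ _ Fp Fq a0 a1); rewrite on_boundary lexx => /(_ isT).
have -> : a * gp + (1 - a) * gq = ((eps - cq) * gp + (cp - eps) * gq) / (cp - cq).
  by rewrite /a; field; exact: lt0r_neq0.
by rewrite ler_pdivrMr // => H; nra.
Qed.

(** The multiplier is the supremum of the slopes (g - v) / (c - eps) over
    infeasible pairs (and 0). *)
Lemma lagrange_multiplier :
  exists2 lam, 0 <= lam & forall c g, F c g -> g - lam * (c - eps) <= v.
Proof.
pose slopes := [set t | t = 0 \/ exists c g, [/\ F c g, eps < c & t = (g - v) / (c - eps)]].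
have slope_le c g : F c g -> c < eps -> ubound slopes ((v - g) / (eps - c)).
  move=> Fcg c_lt t [->|[c' [g' [Fcg' c'_gt ->]]]].
    by apply: divr_ge0; rewrite subr_ge0; [exact: F_bounded _ _ Fcg (ltW c_lt) | exact: ltW].
  have := mixing_slope _ _ _ _ Fcg' Fcg c_lt c'_gt.
  by rewrite ler_pdivrMr ?subr_gt0 // mulrAC ler_pdivlMr ?subr_gt0 // => H; nra.
have slopes_sup : has_sup slopes.
  split; first by exists 0; left.
  by exists ((v - g0) / (eps - c0)); apply: slope_le F_slater c0_lt.
exists (sup slopes) => [|c g Fcg]; first by apply: sup_upper_bound => //; left.
case: (ltgtP eps c) => [c_gt|c_lt|c_eq].
- have : (g - v) / (c - eps) <= sup slopes.
    by apply: sup_upper_bound => //; right; exists c, g; split.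
  by rewrite ler_pdivrMr ?subr_gt0 // => H; nra.
- have : sup slopes <= (v - g) / (eps - c).
    by apply: ge_sup; [exists 0; left | exact: slope_le Fcg c_lt].
  by rewrite ler_pdivlMr ?subr_gt0 // => H; nra.
- by rewrite -c_eq subrr mulr0 subr0; apply: (F_bounded _ _ Fcg); rewrite c_eq.
Qed.
End LagrangeMultiplier.

Section MetricFacts.
Context {R : realType} {T : Type} {d : T -> T -> R} (d_metric : is_metric d).

Lemma dist_refl x : d x x = 0. Proof. by case: d_metric => H _ _; apply/H. Qed.
Lemma dist_sym x y : d x y = d y x. Proof. by case: d_metric. Qed.
Lemma dist_tri x y z : d x z <= d x y + d y z. Proof. by case: d_metric. Qed.

Lemma dist_ge0 x y : 0 <= d x y.
Proof. by have := dist_tri x y x; rewrite dist_refl (dist_sym y x) -mulr2n pmulrn_lge0. Qed.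

Lemma dist_continuous2 : metric_continuous2 d d.
Proof.
move=> x x' e e0; exists (e / 2) => [|y y' h1 h2]; first by rewrite divr_gt0.
have t1 := dist_tri y x x'; have t2 := dist_tri y x' y'.
have t3 := dist_tri x y x'; have t4 := dist_tri y y' x'.
rewrite (dist_sym y x) in t1; rewrite (dist_sym y' x') in t4.
by rewrite ltr_norml; apply/andP; split; lra.
Qed.
End MetricFacts.

Lemma dense_seq {R : realType} {T : pointedType} {d : T -> T -> R} :
  metric_separable d -> exists dn : nat -> T, forall x e, 0 < e -> exists n, d x (dn n) < e.
Proof.
case=> D [/countable_injP [f finj] D_dense].
pose dn n := if pselect (exists y, D y /\ f y = n) is left e then projT1 (cid e) else point.
exists dn => x e e0; have [y Dy xy] := D_dense x e e0.
exists (f y); rewrite /dn; case: pselect => [ex|[]]; last by exists y.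
by case: (cid ex) => y' [Dy' fy'] /=; rewrite (finj y' y) ?inE.
Qed.

Section BorelMetric.
Context {R : realType} {dd : measure_display} {X : measurableType dd}
  {dX : X -> X -> R} (hdX : is_metric dX)
  (hBorel : (@measurable dd X) = <<s metric_open dX >>)
  {dn : nat -> X} (hdn : forall x (e : R), 0 < e -> exists n, dX x (dn n) < e).

Lemma ball_measurable x r : measurable [set y | dX x y < r].
Proof.
rewrite hBorel; apply: sub_sigma_algebra => y /= hy.
exists (r - dX x y) => [|z hz]; first by rewrite subr_gt0.
by apply: le_lt_trans (dist_tri hdX x y z) _; rewrite -ltrBrDl.
Qed.

(** A continuous function on X * X is measurable: a superlevel set
    {f > a} is the countable union of the products of balls around points
    of the dense sequence on which f > a. *)
Lemma continuous2_measurable {f : X -> X -> R} : metric_continuous2 dX f ->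
  measurable_fun setT (fun z : X * X => f z.1 z.2).
Proof.
move=> fc; apply: (measurability _ (RGenOInfty.measurableE R)) => //.
move=> /= _ [_ [a ->] <-]; rewrite setTI preimage_itvoy.
pose rr (k : nat) : R := k.+1%:R^-1.
pose ball n k := [set y | dX (dn n) y < rr k].
pose good n m k := forall y y', ball n k y -> ball m k y' -> a < f y y'.
rewrite [X in measurable X](_ : _ = \bigcup_n \bigcup_m \bigcup_k
    (if `[< good n m k >] then ball n k `*` ball m k else set0)).
  do 3 apply: bigcupT_measurable => ?; case: ifP => _ //.
  by apply: measurableX; exact: ball_measurable.
apply/seteqP; split => [[x x'] /= hz|[y y'] [n _ [m _ [k _]]]]; last first.
  by case: ifPn => // /asboolP hc [/= h1 h2]; exact: hc.
have [del del0 hdel] := fc x x' (f x x' - a) ltac:(by rewrite subr_gt0).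
have [k] := ltr_add_invr (divr_gt0 del0 (ltr0n R 2)); rewrite add0r => hk.
have rk0 : 0 < rr k by rewrite /rr invr_gt0.
have [n hn] := hdn x _ rk0; have [m hm] := hdn x' _ rk0.
have close p z w : dX z (dn p) < rr k -> dX (dn p) w < rr k -> dX z w < del.
  move=> h1 h2; apply: le_lt_trans (dist_tri hdX z (dn p) w) _.
  by rewrite (splitr del) ltrD // (lt_trans _ hk).
exists n => //; exists m => //; exists k => //.
have -> : `[< good n m k >] = true.
  apply/asboolP => y y' hy hy'; have := hdel y y' (close _ _ _ hn hy) (close _ _ _ hm hy').
  by rewrite ltr_norml => /andP[+ _]; rewrite ltrBrDl opprB addrC subrK.
by split; rewrite /ball /= dist_sym.
Qed.

Lemma continuous2_comp_measurable {f : X -> X -> R} {T1 T2 : X -> X} :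
  metric_continuous2 dX f -> measurable_fun setT T1 -> measurable_fun setT T2 ->
  measurable_fun setT (fun x => f (T1 x) (T2 x)).
Proof.
move=> fc m1 m2; apply: (measurableT_comp (f := fun z : X * X => f z.1 z.2)
  (g := fun x => (T1 x, T2 x))); [exact: continuous2_measurable | exact: measurable_fun_pair].
Qed.

Definition row_sup (f : X -> X -> R) (x : X) : \bar R :=
  ereal_sup [set (f x x')%:E | x' in [set: X]].

(** Measurable near-maximizers of a continuous f vanishing on the diagonal. *)
Section GreedySelection.
Context (f : X -> X -> R) (f_cont : metric_continuous2 dX f)
  (f_diag : forall x, f x x = 0).

Fixpoint greedy (k n : nat) (x : X) : X :=
  if n is n'.+1 then
    if (dX x (dn n') <= k%:R) && (f x (greedy k n' x) < f x (dn n'))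
    then dn n' else greedy k n' x
  else x.

Lemma greedy_dist k n x : dX x (greedy k n x) <= k%:R.
Proof.
elim: n => [|n IH] /=; first by rewrite dist_refl.
by case: ifP => // /andP[].
Qed.

Lemma greedy_ge0 k n x : 0 <= f x (greedy k n x).
Proof.
elim: n => [|n IH] /=; first by rewrite f_diag.
by case: ifP => // /andP[_ H]; exact: le_trans IH (ltW H).
Qed.

Lemma greedy_max k n m x : (m < n)%N -> dX x (dn m) <= k%:R ->
  f x (dn m) <= f x (greedy k n x).
Proof.
elim: n => [//|n IH]; rewrite ltnS leq_eqVlt => /orP[/eqP ->|mn] hd.
  by rewrite /= hd /=; case: ltP.
have step : f x (greedy k n x) <= f x (greedy k n.+1 x).
  by rewrite /=; case: ifP => // /andP[_ /ltW].
exact: le_trans (IH mn hd) step.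
Qed.

Lemma greedy_cases k n x : greedy k n x = x \/
  exists2 m, (m < n)%N & (dX x (dn m) <= k%:R /\ greedy k n x = dn m).
Proof.
elim: n => [|n IH] /=; first by left.
case: ifP => [/andP[H _]|_]; first by right; exists n.
by case: IH => [->|[m mn hm]]; [left | right; exists m => //; exact: ltnW].
Qed.

Definition greedy_value k x := f x (greedy k k x).

Lemma greedy_value_nondecreasing x :
  nondecreasing_seq (fun k => (greedy_value k x)%:E).
Proof.
apply/nondecreasing_seqP => k; rewrite lee_fin /greedy_value.
case: (greedy_cases k k x) => [->|[m mk [hm ->]]]; first by rewrite f_diag greedy_ge0.
apply: greedy_max; first exact: ltn_trans mk (ltnSn k).
by apply: le_trans hm _; rewrite ler_nat.
Qed.

Lemma greedy_measurable k n : measurable_fun setT (greedy k n).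
Proof.
elim: n => [|n IH] /=; first exact: measurable_id.
have mid := @measurable_id _ X setT; have mcst := @measurable_cst _ _ X X setT (dn n).
apply: measurable_fun_ifT => //; apply: measurable_and.
- apply: measurable_fun_ler; last exact: measurable_cst.
  exact: continuous2_comp_measurable (dist_continuous2 hdX) mid mcst.
- by apply: measurable_fun_ltr; exact: continuous2_comp_measurable.
Qed.

Lemma greedy_value_measurable k : measurable_fun setT (greedy_value k).
Proof. exact: continuous2_comp_measurable f_cont (@measurable_id _ X setT) (greedy_measurable k k). Qed.

(** The greedy values exhaust the row supremum: any x' is approximated by
    some dn n, which competes once k exceeds n and d(x, dn n). *)
Lemma row_sup_greedy x : row_sup f x = ereal_sup (range (fun k => (greedy_value k x)%:E)).
Proof.
apply/eqP; rewrite eq_le; apply/andP; split; last first.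
  by apply: ge_ereal_sup => _ [k _ <-]; apply: ereal_sup_ubound; exists (greedy k k x).
apply: ge_ereal_sup => _ [x' _ <-]; apply/lee_addgt0Pr => e e0.
have [del del0 Hc] := f_cont x x' e e0; have [n hn] := hdn x' del del0.
pose K := maxn n.+1 (Num.bound (dX x (dn n))).
have hK : dX x (dn n) <= K%:R.
  apply/ltW/(lt_le_trans (archi_boundP (dist_ge0 hdX _ _))).
  by rewrite ler_nat leq_maxr.
have sup_ge : ((greedy_value K x)%:E <= ereal_sup (range (fun k => (greedy_value k x)%:E)))%E.
  by apply: ereal_sup_ubound; exists K.
apply: le_trans (leeD2r _ sup_ge); rewrite -EFinD lee_fin.
have := Hc x (dn n) ltac:(by rewrite dist_refl) hn; rewrite ltr_norml => /andP[near_x' _].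
apply: le_trans (_ : f x (dn n) + e <= _); first lra.
by rewrite lerD2r greedy_max // leq_maxl.
Qed.

Lemma greedy_value_cvg x : (fun k => (greedy_value k x)%:E) @ \oo --> row_sup f x.
Proof. by rewrite row_sup_greedy; exact: ereal_nondecreasing_cvgn (greedy_value_nondecreasing x). Qed.

Lemma row_sup_measurable : measurable_fun setT (row_sup f).
Proof.
apply: (emeasurable_fun_cvg (fun k x => (greedy_value k x)%:E)) => [k|x _].
  exact/measurable_EFinP/greedy_value_measurable.
exact: greedy_value_cvg.
Qed.

Lemma row_sup_ge0 x : (0 <= row_sup f x)%E.
Proof. by apply: ereal_sup_ubound; exists x => //; rewrite f_diag. Qed.

Lemma le_row_sup x y : ((f x y)%:E <= row_sup f x)%E.
Proof. by apply: ereal_sup_ubound; exists y. Qed.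
End GreedySelection.

Section Duality.
Context {Y : Type} {dY : Y -> Y -> R} (hdY : is_metric dY) {h : X -> Y}
  (PX : probability X R)
  (hcont : forall lam : R, 0 <= lam ->
     metric_continuous2 dX (fun x x' => dY (h x) (h x') - lam * dX x x')).

Definition gain (x x' : X) : R := dY (h x) (h x').
Definition lagrangian (lam : R) (x x' : X) : R := gain x x' - lam * dX x x'.

Lemma gain_ge0 x x' : 0 <= gain x x'. Proof. exact: dist_ge0 hdY (h x) (h x'). Qed.

Lemma lagrangian_diag lam x : lagrangian lam x x = 0.
Proof. by rewrite /lagrangian /gain !dist_refl // mulr0 subr0. Qed.

Lemma gain_continuous2 : metric_continuous2 dX gain.
Proof.
move=> x x' e e0; have [del del0 H] := hcont 0 (lexx 0) x x' e e0.
by exists del => // y y' h1 h2; have := H y y' h1 h2; rewrite !mul0r !subr0.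
Qed.

Local Open Scope ereal_scope.

Definition coupling (Pi : probability (X * X)%type R) :=
  forall A : set X, measurable A -> Pi (A `*` setT) = PX A.

Definition expect (Pi : probability (X * X)%type R) (f : X -> X -> R) : \bar R :=
  \int[Pi]_z (f z.1 z.2)%:E.

Lemma continuous2_emeasurable {f : X -> X -> R} : metric_continuous2 dX f ->
  measurable_fun setT (fun z : X * X => (f z.1 z.2)%:E).
Proof. by move=> fc; apply/measurable_EFinP; exact: continuous2_measurable. Qed.

Lemma expect_ge0 Pi (f : X -> X -> R) : (forall x y, 0 <= f x y)%R -> 0 <= expect Pi f.
Proof. by move=> f0; apply: integral_ge0 => z _; rewrite lee_fin. Qed.

Lemma graph_coupling {T : X -> X} : measurable_fun setT T ->
  exists2 Pi, coupling Pi &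
   forall f : X -> X -> R, metric_continuous2 dX f -> (forall x y, 0 <= f x y)%R ->
     expect Pi f = \int[PX]_x (f x (T x))%:E.
Proof.
move=> mT; have mF : measurable_fun setT (fun x => (x, T x)) by exact: measurable_fun_pair.
pose F : {mfun X >-> (X * X)%type} := HB.pack (fun x => (x, T x))
  (isMeasurableFun.Build _ _ _ _ _ mF).
exists (distribution PX F) => [A mA|f fc f0].
  by rewrite /distribution /pushforward /=; congr (PX _); apply/seteqP; split => x //= [].
rewrite /expect /distribution ge0_integral_pushforward //; first exact: continuous2_emeasurable.
by move=> z _; rewrite lee_fin.
Qed.

Lemma diagonal_coupling : exists2 Pi, coupling Pi & expect Pi dX = 0 /\ expect Pi gain = 0.
Proof.
have [Pi cP PiE] := graph_coupling (@measurable_id _ X setT).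
exists Pi => //; split.
- rewrite PiE; [|exact: dist_continuous2 hdX|exact: dist_ge0 hdX].
  by under eq_integral do rewrite dist_refl //; rewrite integral0.
- rewrite PiE; [|exact: gain_continuous2|exact: gain_ge0].
  by under eq_integral do rewrite /gain dist_refl //; rewrite integral0.
Qed.

Lemma mix_coupling {P1 P2 : probability (X * X)%type R} {a : R} :
  (0 <= a)%R -> (a <= 1)%R -> coupling P1 -> coupling P2 ->
  exists2 Pm, coupling Pm &
    expect Pm dX = a%:E * expect P1 dX + (1 - a)%R%:E * expect P2 dX /\
    expect Pm gain = a%:E * expect P1 gain + (1 - a)%R%:E * expect P2 gain.
Proof.
move=> a0 a1 c1 c2; have [Pm [PmA PmI]] := probability_mixture P1 P2 a0 a1.
exists Pm => [A mA|]; last split.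
- rewrite PmA; last exact: measurableX.
  rewrite c1 // c2 // -ge0_muleDl ?lee_fin ?subr_ge0 //.
  by rewrite -EFinD addrC subrK mul1e.
- rewrite /expect PmI //; first exact: continuous2_emeasurable (dist_continuous2 hdX).
  by move=> z; rewrite lee_fin dist_ge0.
- rewrite /expect PmI //; first exact: continuous2_emeasurable gain_continuous2.
  by move=> z; rewrite lee_fin gain_ge0.
Qed.

Lemma r_lambdaE (lam : R) : r_lambda dX dY h lam = row_sup (lagrangian lam).
Proof. by []. Qed.

Lemma r_lambda_measurable (lam : R) : (0 <= lam)%R -> measurable_fun setT (r_lambda dX dY h lam).
Proof.
by move=> lam0; rewrite r_lambdaE; exact: row_sup_measurable _ (hcont lam lam0) (lagrangian_diag lam).
Qed.

Lemma r_lambda_ge0 (lam : R) x : 0 <= r_lambda dX dY h lam x.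
Proof. by rewrite r_lambdaE; exact: row_sup_ge0 _ (lagrangian_diag lam) x. Qed.

Lemma coupling_integral_fst {Pi} {f : X -> \bar R} : coupling Pi ->
  measurable_fun setT f -> (forall x, 0 <= f x) ->
  \int[PX]_x f x = \int[Pi]_z f z.1.
Proof.
move=> cP mf f0; rewrite (eq_measure_integral (pushforward Pi fst)); last first.
  move=> A mA _; rewrite /pushforward /= -(cP A mA); congr (Pi _).
  by apply/seteqP; split => -[x y] /=; first [by case | by move=> ?; split].
by rewrite ge0_integral_pushforward //; exact: measurable_fst.
Qed.

(** Weak duality: g <= (g - lam d_X) + lam d_X <= r_lam(x) + lam d_X(x, x'). *)
Lemma weak_duality Pi (lam : R) : (0 <= lam)%R -> coupling Pi ->
  expect Pi gain <= lam%:E * expect Pi dX + \int[PX]_x r_lambda dX dY h lam x.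
Proof.
move=> lam0 cP; have mr := r_lambda_measurable lam lam0.
have mdX := continuous2_measurable (dist_continuous2 hdX).
have mcost : measurable_fun setT (fun z : X * X => lam%:E * (dX z.1 z.2)%:E).
  by apply/measurable_EFinP/measurable_funM => //; exact: measurable_cst.
rewrite (coupling_integral_fst cP mr (r_lambda_ge0 lam)) /expect.
rewrite -ge0_integralZl_EFin //; last exact/measurable_EFinP.
rewrite addeC -ge0_integralD //; last 3 first.
- by move=> z _; exact: r_lambda_ge0.
- exact: measurableT_comp mr measurable_fst.
- by move=> z _; rewrite -EFinM lee_fin mulr_ge0 // dist_ge0.
apply: ge0_le_integral => //.
- by move=> z _; rewrite lee_fin gain_ge0.
- exact: continuous2_emeasurable gain_continuous2.
- by apply: emeasurable_funD => //; exact: measurableT_comp mr measurable_fst.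
- move=> [x y] _ /=; rewrite -EFinM -[gain x y](subrK (lam * dX x y)%R) EFinD.
  by rewrite r_lambdaE; apply: leeD2r; exact: le_row_sup.
by move=> z _; rewrite lee_fin dist_ge0.
Qed.

(** By monotone convergence, E[r_lam] is approached by the greedy values. *)
Lemma greedy_level {lam w : R} : (0 <= lam)%R ->
  w%:E < \int[PX]_x r_lambda dX dY h lam x ->
  exists k, w%:E < \int[PX]_x (greedy_value (lagrangian lam) k x)%:E.
Proof.
move=> lam0 hw; pose u k x := (greedy_value (lagrangian lam) k x)%:E.
have mu k : measurable_fun setT (u k).
  exact/measurable_EFinP/(greedy_value_measurable _ (hcont lam lam0)).
have u0 k x : setT x -> 0 <= u k x.
  by move=> _; rewrite lee_fin; exact: (greedy_ge0 _ (lagrangian_diag lam) k k x).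
have nd x : setT x -> nondecreasing_seq (u ^~ x).
  by move=> _; exact: greedy_value_nondecreasing _ (lagrangian_diag lam) x.
have rE : \int[PX]_x r_lambda dX dY h lam x = \int[PX]_x limn (u ^~ x).
  apply: eq_integral => x _; apply/esym/cvg_lim => //.
  exact: greedy_value_cvg _ (hcont lam lam0) (lagrangian_diag lam) x.
case: (pselect (exists k, w%:E < \int[PX]_x u k x)) => // Nlevel; exfalso.
move: hw; rewrite rE (monotone_convergence PX measurableT mu u0 nd).
apply/negP; rewrite -leNgt; apply: lime_le.
  exact: (cvgP _ (cvg_monotone_convergence (mu := PX) measurableT mu u0 nd)).
by apply: nearW => k; rewrite leNgt; apply/negP => lt_w; apply: Nlevel; exists k.
Qed.

Lemma greedy_coupling {lam : R} k : (0 <= lam)%R ->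
  exists2 Pi, coupling Pi & exists c : R, expect Pi dX = c%:E /\
    expect Pi gain = \int[PX]_x (greedy_value (lagrangian lam) k x)%:E + (lam * c)%:E.
Proof.
move=> lam0; pose T := greedy (lagrangian lam) k k.
have mT : measurable_fun setT T := greedy_measurable _ (hcont lam lam0) k k.
have [Pi cP PiE] := graph_coupling mT.
pose cost := \int[PX]_x (dX x (T x))%:E.
have mcost : measurable_fun setT (fun x => (dX x (T x))%:E).
  exact/measurable_EFinP/(continuous2_comp_measurable (dist_continuous2 hdX)
    (@measurable_id _ X setT) mT).
have cost0 x : setT x -> 0 <= (dX x (T x))%:E by move=> _; rewrite lee_fin dist_ge0.
have cost_fin : cost \is a fin_num.
  rewrite ge0_fin_numE ?integral_ge0 //; apply: (@le_lt_trans _ _ (k%:R%:E)); last exact: ltry.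
  apply: le_trans (_ : \int[PX]_x (cst (k%:R%:E) x) <= _).
    by apply: ge0_le_integral => // x _; rewrite lee_fin greedy_dist.
  have PX1 : (PX : {measure set X -> \bar R}) setT = 1 by exact: probability_setT.
  by rewrite integral_cst // PX1 mule1.
exists Pi => //; exists (fine cost); split.
  by rewrite PiE ?fineK //; [exact: dist_continuous2 hdX | exact: dist_ge0 hdX].
rewrite PiE; [|exact: gain_continuous2|exact: gain_ge0].
rewrite EFinM fineK // -ge0_integralZl_EFin // -ge0_integralD //.
- by apply: eq_integral => x _; rewrite -EFinM -EFinD /greedy_value /lagrangian subrK.
- by move=> x _; rewrite lee_fin; exact: (greedy_ge0 _ (lagrangian_diag lam) k k x).
- exact/measurable_EFinP/(greedy_value_measurable _ (hcont lam lam0)).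
- by move=> x _; rewrite -EFinM lee_fin mulr_ge0 // dist_ge0.
- exact/measurable_EFinP/measurable_funM/measurable_EFinP.
Qed.

Lemma near_optimal_coupling {lam w : R} : (0 <= lam)%R ->
  w%:E < \int[PX]_x r_lambda dX dY h lam x ->
  exists2 Pi, coupling Pi & exists c : R,
    expect Pi dX = c%:E /\ (w + lam * c)%:E < expect Pi gain.
Proof.
move=> lam0 hw; have [k hk] := greedy_level lam0 hw.
have [Pi cP [c [costE gainE]]] := greedy_coupling k lam0.
by exists Pi => //; exists c; split => //; rewrite gainE EFinD lteD2rE.
Qed.

Context (eps : R) (heps : (0 < eps)%R).
Let value := fair_regularizer dX dY PX eps h.

Lemma le_fair_regularizer Pi : coupling Pi -> expect Pi dX <= eps%:E ->
  expect Pi gain <= value.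
Proof. by move=> cP hC; apply: ereal_sup_ubound; exists Pi; split. Qed.

Lemma fair_regularizer_ge0 : 0 <= value.
Proof.
have [Pi cP [cost0 gain0]] := diagonal_coupling.
by rewrite -gain0; apply: le_fair_regularizer; rewrite // cost0 lee_fin ltW.
Qed.

(** When the regularizer is finite, so is the gain of any coupling of
    finite cost c: mixing it with weight eps / (c + eps) against the
    diagonal coupling makes it feasible. *)
Lemma gain_fin_num {v c : R} {Pi} : value = v%:E -> coupling Pi -> expect Pi dX = c%:E ->
  expect Pi gain \is a fin_num.
Proof.
move=> valueE cP costE; have c0 : (0 <= c)%R.
  by rewrite -lee_fin -costE expect_ge0 // => x y; exact: dist_ge0.
rewrite ge0_fin_numE ?expect_ge0 //; last exact: gain_ge0.
rewrite ltey; apply/negP => /eqP gain_oo.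
have ce0 : (0 < c + eps)%R by rewrite ltr_wpDl.
pose a := (eps / (c + eps))%R.
have a0 : (0 < a)%R by rewrite divr_gt0.
have a1 : (a <= 1)%R by rewrite ler_pdivrMr // mul1r lerDr.
have [Pi0 cP0 [cost0 gain0]] := diagonal_coupling.
have [Pm cPm [costm gainm]] := mix_coupling (ltW a0) a1 cP cP0.
have : expect Pm gain <= value.
  apply: le_fair_regularizer => //; rewrite costm costE cost0 mule0 adde0 -EFinM lee_fin.
  by rewrite /a mulrAC ler_pdivrMr //; nra.
by rewrite gainm gain_oo gain0 mule0 adde0 gt0_muley ?lte_fin // valueE leNgt ltry.
Qed.

(** The (cost, value) pairs of couplings form a convex set with the Slater
    point (0, 0), so a Lagrange multiplier exists. *)
Lemma coupling_multiplier {v : R} : value = v%:E ->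
  exists2 lam, (0 <= lam)%R & forall Pi (c g : R), coupling Pi ->
    expect Pi dX = c%:E -> expect Pi gain = g%:E -> (g - lam * (c - eps) <= v)%R.
Proof.
move=> valueE.
pose F (c g : R) := exists2 Pi, coupling Pi & expect Pi dX = c%:E /\ expect Pi gain = g%:E.
have F_convex c1 g1 c2 g2 a : F c1 g1 -> F c2 g2 -> (0 <= a)%R -> (a <= 1)%R ->
    F (a * c1 + (1 - a) * c2)%R (a * g1 + (1 - a) * g2)%R.
  move=> [P1 cP1 [C1 G1]] [P2 cP2 [C2 G2]] a0 a1.
  have [Pm cPm [Cm Gm]] := mix_coupling a0 a1 cP1 cP2.
  by exists Pm => //; rewrite Cm Gm C1 C2 G1 G2 -!EFinM -!EFinD.
have F_bounded c g : F c g -> (c <= eps)%R -> (g <= v)%R.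
  move=> [Pi cP [C G]] ce; rewrite -lee_fin -G -valueE.
  by apply: le_fair_regularizer; rewrite // C lee_fin.
have [Pi0 cP0 [cost0 gain0]] := diagonal_coupling.
have [lam lam0 Hlam] := lagrange_multiplier F_convex F_bounded
  (ex_intro2 _ _ Pi0 cP0 (conj cost0 gain0)) heps.
by exists lam => // Pi c g cP C G; apply: Hlam; exists Pi.
Qed.

(** Strong duality: at the multiplier, the dual value does not exceed R(h);
    otherwise a near-optimal coupling would violate the multiplier bound. *)
Lemma dual_le_fair_regularizer : ereal_inf [set (lam * eps)%:E +
  \int[PX]_x r_lambda dX dY h lam x | lam in [set lam : R | (0 <= lam)%R]] <= value.
Proof.
case: (eqVneq value +oo) => [->|value_fin]; first exact: leey.
have valueE : value = (fine value)%:E.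
  by rewrite fineK // ge0_fin_numE ?fair_regularizer_ge0 // ltey.
have [lam lam0 Hlam] := coupling_multiplier valueE.
apply: le_trans (_ : _ <= (lam * eps)%:E + \int[PX]_x r_lambda dX dY h lam x) _.
  by apply: ereal_inf_lbound; exists lam.
rewrite leNgt; apply/negP => dual_gt.
have hw : (fine value - lam * eps)%:E < \int[PX]_x r_lambda dX dY h lam x.
  move: dual_gt; rewrite {1}valueE; case: (\int[PX]_x _) => [r| |] //.
    by rewrite -EFinD !lte_fin => ?; lra.
  by move=> _; exact: ltry.
have [Pi cP [c [costE gain_gt]]] := near_optimal_coupling lam0 hw.
have gainE := fineK (gain_fin_num valueE cP costE).
have multiplier_bound := Hlam Pi c _ cP costE (esym gainE).
move: gain_gt; rewrite -gainE lte_fin; apply/negP; rewrite -leNgt.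
by move: multiplier_bound; move: (fine (expect Pi gain)) (fine value) => g v; lra.
Qed.

(** Weak duality at every lam >= 0 gives the converse inequality. *)
Lemma fair_regularizer_le_dual : value <= ereal_inf [set (lam * eps)%:E +
  \int[PX]_x r_lambda dX dY h lam x | lam in [set lam : R | (0 <= lam)%R]].
Proof.
apply: le_ereal_inf_tmp => _ [lam lam0 <-]; apply: ge_ereal_sup => _ [Pi [hC cP ->]].
apply: le_trans (weak_duality _ _ lam0 cP) _; rewrite EFinM.
by apply: leeD2r; apply: lee_wpmul2l; rewrite ?lee_fin.
Qed.
End Duality.
End BorelMetric.

(** Theorem 2.3: separability provides the dense sequence on which the
    measurable selections are built; the two duality inequalities then give
    equality. *)
Theorem theorem2p3 (R : realType) (dd : measure_display) (X : measurableType dd)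
  (Y : Type) (dX : X -> X -> R) (dY : Y -> Y -> R)
  (hdX : is_metric dX) (hcX : metric_complete dX) (hsX : metric_separable dX)
  (hdY : is_metric dY) (hcY : metric_complete dY) (hsY : metric_separable dY)
  (hBorel : (@measurable dd X) = <<s metric_open dX >>)
  (PX : probability X R) (eps : R) (heps : 0 < eps) (h : X -> Y)
  (hcont : forall lam : R, 0 <= lam ->
     metric_continuous2 dX (fun x x' => dY (h x) (h x') - lam * dX x x')) :
  fair_regularizer dX dY PX eps h =
  ereal_inf [set ((lam * eps)%:E + \int[PX]_x r_lambda dX dY h lam x)%E
            | lam in [set lam : R | 0 <= lam]].
Proof.
have [dn hdn] := dense_seq hsX.
apply/eqP; rewrite eq_le.
rewrite (fair_regularizer_le_dual hdX hBorel hdn hdY PX hcont eps).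
by rewrite (dual_le_fair_regularizer hdX hBorel hdn hdY PX hcont eps heps).
Qed.
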